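(* Let $\langle A,\to\rangle$ be a conditional algebra, and write $T=T_A$, with $u,v,w$ ranging over $\mathrm{Ul}(A)$ and $Y,Z$ over closed subsets of the Stone space $\mathrm{Ul}(A)$. Then: (A4) $a\to b\le c\to(a\to b)$ holds for all $a,b,c\in A$ iff for all $u,v,w,Y,Z$: $T(u,Y,v)$ and $T(v,Z,w)$ imply $T(u,Z,w)$; (A5) $a\wedge(a\to b)\le b$ holds for all $a,b$ iff $T(u,\{u\},u)$ for all $u$; (A6) $a\to b\le\neg b\to\neg a$ holds for all $a,b$ iff for all $u,v,Y$: $T(u,Y,v)$ implies there is $w\in Y$ with $T(u,\{v\},w)$; (A7) $\neg(a\to b)\le c\to\neg(a\to b)$ holds for all $a,b,c$ iff for all $u,v,w,Y,Z$: $T(u,Y,v)$ and $T(u,Z,w)$ imply $T(v,Z,w)$; (A8) $(1\to(\neg a\vee b))\wedge(b\to c)\le a\to c$ holds for all $a,b,c$ iff for all $u,v,Y,Z$: if $T(u,Y,v)$ and $T(u,\mathrm{Ul}(A))\cap Y\subseteq Z$, then $T(u,Z,v)$.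
   Context: A conditional algebra is $\langle A,\to\rangle$ with $A$ a Boolean algebra and $\to$ binary with $a\to1=1$, $(a\to b)\wedge(a\to c)=a\to(b\wedge c)$, $(a\vee b)\to c\le(a\to c)\wedge(b\to c)$. $\mathrm{Ul}(A)$ is the Stone space of ultrafilters; its closed sets are the $\varphi(F)=\{u:F\subseteq u\}$ for filters $F$ (including $F=A$, giving $\emptyset$). $D^{\to}_u(F)=\{b:\exists a\in F,\ a\to b\in u\}$; $T_A(u,Z,v)$ iff there is a filter $F$ with $Z=\varphi(F)$ and $D^{\to}_u(F)\subseteq v$; $T_A(u,Z)=\{v:T_A(u,Z,v)\}$. *)

From HB Require Import structures.
From mathcomp Require Import all_boot all_order.
Set Implicit Arguments. Unset Strict Implicit. Unset Printing Implicit Defensive.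
Import Order.TTheory.
Local Open Scope order_scope.

(* A Boolean algebra is a complemented distributive lattice with top and
   bottom: mathcomp's ctbDistrLatticeType.  Meet `&`, join `|`,
   complement ~`, top \top, bottom \bot. *)

Section CondAlg.
Context {disp : Order.disp_t} {A : ctbDistrLatticeType disp}.

Definition conditional_algebra (imp : A -> A -> A) : Prop :=
  [/\ (forall a, imp a \top = \top),
      (forall a b c, imp a b `&` imp a c = imp a (b `&` c)) &
      (forall a b c, imp (a `|` b) c <= imp a c `&` imp b c)].

(* filters (the improper filter A itself is allowed) *)
Definition is_filter (F : A -> Prop) : Prop :=
  [/\ F \top,
      (forall a b, F a -> a <= b -> F b) &
      (forall a b, F a -> F b -> F (a `&` b))].

Definition proper_filter (F : A -> Prop) : Prop := is_filter F /\ ~ F \bot.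

Definition is_ultrafilter (u : A -> Prop) : Prop :=
  proper_filter u /\
  forall F, proper_filter F -> (forall a, u a -> F a) -> forall a, F a -> u a.

Definition Ul := { u : A -> Prop | is_ultrafilter u }.

Definition ulmem (u : Ul) (a : A) : Prop := proj1_sig u a.

Definition phi (F : A -> Prop) : Ul -> Prop := fun w => forall a, F a -> ulmem w a.

Definition closed_Ul (Z : Ul -> Prop) : Prop :=
  exists F, is_filter F /\ forall w, Z w <-> phi F w.

Definition Dimp (imp : A -> A -> A) (u : Ul) (F : A -> Prop) : A -> Prop :=
  fun b => exists a, F a /\ ulmem u (imp a b).

Definition TA (imp : A -> A -> A) (u : Ul) (Z : Ul -> Prop) (v : Ul) : Prop :=
  exists F, is_filter F /\ (forall w, Z w <-> phi F w) /\
            (forall b, Dimp imp u F b -> ulmem v b).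

Definition TAset (imp : A -> A -> A) (u : Ul) (Z : Ul -> Prop) : Ul -> Prop :=
  fun v => TA imp u Z v.

Definition singleton_Ul (u : Ul) : Ul -> Prop := fun w => w = u.
Definition full_Ul : Ul -> Prop := fun _ => True.

End CondAlg.
Arguments Ul {disp} A.

From HB Require Import structures.
From mathcomp Require Import all_boot all_order.
From mathcomp Require Import boolp classical_sets.
Import Order.Theory.
Local Open Scope order_scope.
Set Implicit Arguments. Unset Strict Implicit. Unset Printing Implicit Defensive.

(* Everything reduces to the ultrafilter lemma: an element outside a filter
   G is avoided by some ultrafilter containing G (Zorn's lemma), so G is
   recovered from its closed set phi G, and b <= c holds as soon as every
   ultrafilter containing b contains c.  Hence T(u, phi F, v) just says that
   a -> b in u and a in F force b in v.  To derive an inequality from its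
   frame condition one tests the condition on the closed sets phi(up c):
   the v with T(u, phi(up c), v) are exactly the ultrafilters containing
   {x | c -> x in u}, so c -> x lies in u as soon as x lies in all of them. *)

Section BooleanLattice.
Context {disp : Order.disp_t} {A : ctbDistrLatticeType disp}.

Lemma leI_shunt (x y z : A) : (x `&` y <= z) = (x <= ~` y `|` z).
Proof. by rewrite -leBLR diffE complK. Qed.

Lemma leI0_compl (x y : A) : (x `&` y <= \bot) = (x <= ~` y).
Proof. by rewrite leI_shunt joinx0. Qed.

End BooleanLattice.

Section Filters.
Context {disp : Order.disp_t} {A : ctbDistrLatticeType disp}.
Implicit Types (F G : A -> Prop) (u w : Ul A) (Z : Ul A -> Prop).

Definition upset (c : A) : A -> Prop := fun x => c <= x.

Lemma upset_filter c : is_filter (upset c).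
Proof.
split; rewrite /upset; first exact: lex1.
- by move=> x y /le_trans; apply.
- by move=> x y cx cy; rewrite lexI cx cy.
Qed.

Definition fjoin F G : A -> Prop := fun z => exists f g, [/\ F f, G g & f `&` g <= z].

Lemma fjoin_filter F G : is_filter F -> is_filter G -> is_filter (fjoin F G).
Proof.
move=> [F1 Fup FI] [G1 Gup GI]; split.
- by exists \top, \top; rewrite meetx1.
- by move=> x y [f [g [Ff Gg /le_trans fgx]]] /fgx; exists f, g.
- move=> x y [f [g [Ff Gg fgx]]] [f' [g' [Ff' Gg' fgy]]].
  exists (f `&` f'), (g `&` g'); split; [exact: FI | exact: GI |].
  by rewrite meetACA lexI leIxl // leIxr.
Qed.

Lemma fjoinl F G a : is_filter G -> F a -> fjoin F G a.
Proof. by move=> [G1 _ _] Fa; exists a, \top; rewrite meetx1. Qed.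

Lemma fjoinr F G a : is_filter F -> G a -> fjoin F G a.
Proof. by move=> [F1 _ _] Ga; exists \top, a; rewrite meet1x. Qed.

Lemma fjoin_bot F G : fjoin F G \bot -> exists f g, [/\ F f, G g & g <= ~` f].
Proof. by move=> [f [g [Ff Gg]]]; rewrite meetC leI0_compl; exists f, g. Qed.

Lemma fjoin_upset_bot F c : fjoin F (upset c) \bot -> exists2 f, F f & f <= ~` c.
Proof.
by case/fjoin_bot=> f [g [Ff cg gf]]; exists f; rewrite // lexC (le_trans cg).
Qed.

Lemma proper_fjoin_compl G x :
  is_filter G -> ~ G x -> proper_filter (fjoin G (upset (~` x))).
Proof.
move=> fG nGx; split; first exact/fjoin_filter/upset_filter.
case/fjoin_upset_bot=> f Gf; rewrite complK => fx.
by case: fG nGx => _ Gup _; apply; apply: Gup fx.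
Qed.

Lemma proper_filter_chain G (C : set (set A)) :
  proper_filter G -> (forall X, C X -> proper_filter (G `|` X)%classic) ->
  total_on C subset -> proper_filter (G `|` \bigcup_(X in C) X)%classic.
Proof.
move=> pG pC totC; set U := (G `|` _)%classic.
have common x y : U x -> U y ->
    exists2 H, proper_filter H & [/\ H x, H y & (H `<=` U)%classic].
  have sub X : C X -> (G `|` X `<=` U)%classic.
    by move=> CX; apply: setUS; apply: bigcup_sup.
  case=> [Gx|[X CX Xx]] [Gy|[Y CY Yy]].
  - by exists G => //; split=> //; apply: subsetUl.
  - by exists (G `|` Y)%classic; [apply: pC | split; [left|right|apply: sub]].
  - by exists (G `|` X)%classic; [apply: pC | split; [right|left|apply: sub]].
  - have [XY|YX] := totC X Y CX CY.
    + by exists (G `|` Y)%classic; [apply: pC | split; [right; apply: XY|right|apply: sub]].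
    + by exists (G `|` X)%classic; [apply: pC | split; [right|right; apply: YX|apply: sub]].
have [[G1 _ _] _] := pG.
split; first split.
- by left.
- move=> x y Ux xy; have [H [[_ Hup _] _] [Hx _ HU]] := common x x Ux Ux.
  exact/HU/(Hup x).
- move=> x y Ux Uy; have [H [[_ _ HI] _] [Hx Hy HU]] := common x y Ux Uy.
  exact/HU/HI.
- by move=> U0; have [H [_ nH0] [H0 _ _]] := common _ _ U0 U0.
Qed.

Lemma ultrafilter_exists G : proper_filter G -> exists w, forall a, G a -> ulmem w a.
Proof.
(* Zorn runs over the X with G `|` X a proper filter, so that the empty chain
   is bounded too. *)
move=> pG; pose P X := proper_filter (G `|` X)%classic.
have [|X [PX Xmax]] := @Zorn_bigcup _ P.
  by move=> C CP totC; apply: proper_filter_chain.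
have uH : is_ultrafilter (G `|` X)%classic.
  split=> // F pF HF a Fa; apply: contrapT => nHa.
  have PF : P F.
    by rewrite /P (_ : (G `|` F)%classic = F) //; apply/setUidr => b Gb; apply/HF; left.
  apply: (Xmax F) PF; split; first by move=> b Xb; apply: HF; right.
  by move=> FX; apply: nHa; right; apply: FX.
by exists (exist _ _ uH) => a Ga; left.
Qed.

Lemma ul_filter w : is_filter (ulmem w).
Proof. exact: (proj2_sig w).1.1. Qed.

Lemma ul_top w : ulmem w \top.
Proof. by case: (ul_filter w). Qed.

Lemma ul_up w a b : ulmem w a -> a <= b -> ulmem w b.
Proof. by case: (ul_filter w) => _ wup _; apply: wup. Qed.

Lemma ul_meet w a b : ulmem w a -> ulmem w b -> ulmem w (a `&` b).
Proof. by case: (ul_filter w) => _ _; apply. Qed.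

Lemma ul_meetP w a b : ulmem w (a `&` b) <-> ulmem w a /\ ulmem w b.
Proof.
split=> [wab|[]]; last exact: ul_meet.
by split; apply: ul_up wab _; [apply: leIl | apply: leIr].
Qed.

Lemma ul_complN w a : ulmem w (~` a) -> ~ ulmem w a.
Proof.
move=> wna wa; have [_ nw0] := (proj2_sig w).1.
by apply: nw0; rewrite -(meetxC a); apply: ul_meet.
Qed.

Lemma ultrafilter_sep G x : is_filter G -> ~ G x -> exists w, phi G w /\ ~ ulmem w x.
Proof.
move=> fG nGx; have [w Jw] := ultrafilter_exists (proper_fjoin_compl fG nGx).
exists w; split; first by move=> a Ga; apply/Jw/fjoinl => //; apply: upset_filter.
by apply/ul_complN/Jw/fjoinr => //; apply: lexx.
Qed.

Lemma phi_mem G x : is_filter G -> (forall w, phi G w -> ulmem w x) -> G x.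
Proof.
move=> fG Gx; apply: contrapT => nGx.
by have [w [/Gx wx nwx]] := ultrafilter_sep fG nGx.
Qed.

Lemma ul_le (y z : A) : (forall w, ulmem w y -> ulmem w z) -> y <= z.
Proof. by move=> yz; apply: phi_mem (upset_filter y) _ => w /(_ y (lexx y)) /yz. Qed.

Lemma ul_compl w a : ~ ulmem w a -> ulmem w (~` a).
Proof.
move=> nwa; have [_ wmax] := proj2_sig w.
have [/fjoin_upset_bot [f wf fa]|nJ0] := pselect (fjoin (ulmem w) (upset a) \bot).
  exact: ul_up wf fa.
exfalso; apply/nwa/(wmax (fjoin (ulmem w) (upset a))).
- by split=> //; apply: fjoin_filter (ul_filter w) (upset_filter a).
- by move=> b wb; apply: fjoinl => //; apply: upset_filter.
- exact: fjoinr (ul_filter w) (lexx a).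
Qed.

Lemma ul_join w a b : ulmem w (a `|` b) -> ulmem w a \/ ulmem w b.
Proof.
move=> wab; have [wa|/ul_compl wna] := pselect (ulmem w a); [by left | right].
by apply: ul_up (ul_meet wna wab) _; rewrite meetUr meetCx join0x leIr.
Qed.

Lemma phi_upsetE c w : phi (upset c) w <-> ulmem w c.
Proof. by split=> [|wc a ca]; [apply; apply: lexx | apply: ul_up wc ca]. Qed.

Lemma singleton_UlE u : singleton_Ul u = phi (ulmem u).
Proof.
apply/funext => w; apply/propext; split=> [-> //|uw].
have [_ umax] := proj2_sig u.
have wu a : ulmem w a -> ulmem u a by apply: umax => //; apply: (proj2_sig w).1.
case: u w uw wu {umax} => U uU [W uW] /= uw wu.
by apply: eq_exist; apply/funext => a; apply/propext; split; [apply: wu | apply: uw].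
Qed.

Lemma full_UlE : full_Ul = phi (upset \top) :> (Ul A -> Prop).
Proof.
apply/funext => w; apply/propext; split=> // _.
by apply/phi_upsetE; apply: ul_top.
Qed.

Lemma closed_UlP Z : closed_Ul Z -> exists2 F, is_filter F & Z = phi F.
Proof. by move=> [F [fF ZF]]; exists F => //; apply/funext => w; apply/propext. Qed.

Lemma closed_upset c : closed_Ul (phi (upset c)).
Proof. by exists (upset c); split; first exact: upset_filter. Qed.

End Filters.

Section CanonicalRelation.
Context {disp : Order.disp_t} {A : ctbDistrLatticeType disp}.
Variable imp : A -> A -> A.
Hypothesis hA : conditional_algebra imp.
Implicit Types (F : A -> Prop) (u v w : Ul A) (Y Z : Ul A -> Prop).

Lemma imp_mono a b c : b <= c -> imp a b <= imp a c.
Proof. by case: hA => _ impI _ bc; rewrite -(meet_l bc) -impI leIr. Qed.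

Lemma imp_anti a a' c : a <= a' -> imp a' c <= imp a c.
Proof.
by case: hA => _ _ impU aa'; rewrite -{1}(join_r aa') (le_trans (impU _ _ _)) ?leIl.
Qed.

Lemma Dimp_filter u F : is_filter F -> is_filter (Dimp imp u F).
Proof.
case: hA => imp1 impI _ [F1 _ FI]; split.
- by exists \top; rewrite imp1; split=> //; apply: ul_top.
- by move=> a b [c [Fc uca]] ab; exists c; split=> //; apply: ul_up uca (imp_mono _ ab).
- move=> a b [c [Fc uca]] [c' [Fc' ucb]]; exists (c `&` c'); split; first exact: FI.
  rewrite -impI; apply: ul_meet.
  + by apply: ul_up uca _; apply/imp_anti/leIl.
  + by apply: ul_up ucb _; apply/imp_anti/leIr.
Qed.

Lemma TAP u v F : is_filter F ->
  TA imp u (phi F) v <-> (forall a b, F a -> ulmem u (imp a b) -> ulmem v b).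
Proof.
move=> fF; split=> [[G [fG [FG Dv]]] a b Fa uab | Dv]; last first.
  by exists F; split=> //; split=> // b [a [Fa uab]]; apply: Dv uab.
apply: Dv; exists a; split=> //.
by apply: phi_mem fG _ => w /FG; apply.
Qed.

Lemma TA_closed u Z v : TA imp u Z v -> exists2 F, is_filter F & Z = phi F.
Proof. by move=> [F [fF [ZF _]]]; apply: closed_UlP; exists F. Qed.

Lemma TA_upset_mem u v c b :
  TA imp u (phi (upset c)) v -> ulmem u (imp c b) -> ulmem v b.
Proof. by move/(TAP _ _ (upset_filter c)); apply; apply: lexx. Qed.

Lemma imp_mem u c x :
  (forall v, TA imp u (phi (upset c)) v -> ulmem v x) -> ulmem u (imp c x).
Proof.
move=> Tx; have [|a [ca uax]] := phi_mem (Dimp_filter u (upset_filter c)) (x := x).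
  move=> v Dv; apply/Tx/TAP; first exact: upset_filter.
  by move=> a b ca uab; apply: Dv; exists a.
exact: ul_up uax (imp_anti _ ca).
Qed.

Lemma A4_iff : (forall a b c, imp a b <= imp c (imp a b)) <->
  (forall u v w Y Z, closed_Ul Y -> closed_Ul Z ->
     TA imp u Y v -> TA imp v Z w -> TA imp u Z w).
Proof.
split=> [A4 u v w Y Z _ _ Tuv Tvw | T4 a b c].
- have [FY fY eY] := TA_closed Tuv; have [FZ fZ eZ] := TA_closed Tvw.
  move: Tuv Tvw; rewrite eY eZ => /(TAP _ _ fY) Tuv /(TAP _ _ fZ) Tvw.
  apply/TAP => // a b FZa uab; apply: Tvw FZa _.
  by apply: Tuv (ul_up uab (A4 a b \top)); case: fY.
- apply: ul_le => u uab; apply: imp_mem => v Tuv; apply: imp_mem => w Tvw.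
  exact: TA_upset_mem (T4 _ _ _ _ _ (closed_upset c) (closed_upset a) Tuv Tvw) uab.
Qed.

Lemma A5_iff : (forall a b, a `&` imp a b <= b) <->
  (forall u, TA imp u (singleton_Ul u) u).
Proof.
split=> [A5 u | T5 a b].
- rewrite singleton_UlE; apply/TAP; first exact: ul_filter.
  by move=> a b ua uab; apply: ul_up (ul_meet ua uab) (A5 a b).
- apply: ul_le => u /ul_meetP[ua uab].
  by move: (T5 u); rewrite singleton_UlE => /(TAP _ _ (ul_filter u))/(_ a b ua uab); exact.
Qed.

Lemma A6_iff : (forall a b, imp a b <= imp (~` b) (~` a)) <->
  (forall u v Y, closed_Ul Y -> TA imp u Y v ->
     exists w, Y w /\ TA imp u (singleton_Ul v) w).
Proof.
split=> [A6 u v Y _ Tuv | T6 a b].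
- have [F fF eY] := TA_closed Tuv; move: Tuv; rewrite eY => /(TAP _ _ fF) Tuv.
  have fD := Dimp_filter u (ul_filter v).
  have [|w Jw] := @ultrafilter_exists _ _ (fjoin F (Dimp imp u (ulmem v))).
    split; first exact: fjoin_filter.
    case/fjoin_bot=> f [y [Ff [c [vc ucy]] yf]].
    have ufc : ulmem u (imp f (~` c)).
      by rewrite -[f]complK; apply: ul_up (A6 _ _); apply: ul_up ucy (imp_mono _ yf).
    exact: ul_complN (Tuv _ _ Ff ufc) vc.
  exists w; split; first by move=> a Fa; apply/Jw/fjoinl.
  rewrite singleton_UlE; apply/TAP; first exact: ul_filter.
  by move=> a b va uab; apply/Jw/fjoinr => //; exists a.
- apply: ul_le => u uab; apply: imp_mem => v Tv.
  have [w [/phi_upsetE wnb Tw]] := T6 u v _ (closed_upset _) Tv.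
  apply: ul_compl => va; apply: (ul_complN (a := b) wnb).
  by move: Tw; rewrite singleton_UlE => /(TAP _ _ (ul_filter v))/(_ a b va uab).
Qed.

Lemma A7_iff : (forall a b c, ~` (imp a b) <= imp c (~` (imp a b))) <->
  (forall u v w Y Z, closed_Ul Y -> closed_Ul Z ->
     TA imp u Y v -> TA imp u Z w -> TA imp v Z w).
Proof.
split=> [A7 u v w Y Z _ _ Tuv Tuw | T7 a b c].
- have [FY fY eY] := TA_closed Tuv; have [FZ fZ eZ] := TA_closed Tuw.
  move: Tuv Tuw; rewrite eY eZ => /(TAP _ _ fY) Tuv /(TAP _ _ fZ) Tuw.
  apply/TAP => // a b FZa vab.
  have [uab|/ul_compl unab] := pselect (ulmem u (imp a b)); first exact: Tuw uab.
  by exfalso; apply: ul_complN vab; apply: Tuv (ul_up unab (A7 a b \top)); case: fY.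
- apply: ul_le => u unab; apply: imp_mem => v Tv; apply: ul_compl => vab.
  apply: (ul_complN (a := imp a b) unab); apply: imp_mem => w Tw.
  exact: TA_upset_mem (T7 _ _ _ _ _ (closed_upset c) (closed_upset a) Tv Tw) vab.
Qed.

Lemma A8_iff : (forall a b c, imp \top (~` a `|` b) `&` imp b c <= imp a c) <->
  (forall u v Y Z, closed_Ul Y -> closed_Ul Z -> TA imp u Y v ->
     (forall w, TAset imp u full_Ul w -> Y w -> Z w) -> TA imp u Z v).
Proof.
split=> [A8 u v Y Z _ cZ Tuv YZ | T8 a b c].
- have [FY fY eY] := TA_closed Tuv; have [FZ fZ eZ] := closed_UlP cZ.
  move: Tuv YZ; rewrite eY eZ => /(TAP _ _ fY) Tuv YZ.
  apply/TAP => // a c FZa uac.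
  have fE := Dimp_filter u (upset_filter \top).
  have [|e [f [[t [tt ute] FYf efa]]]] := phi_mem (fjoin_filter fE fY) (x := a).
    move=> w Jw; apply: YZ FZa => [|x FYx]; last by apply/Jw/fjoinr.
    rewrite /TAset full_UlE; apply/TAP; first exact: upset_filter.
    by move=> x y tx uxy; apply/Jw/fjoinl => //; exists x.
  apply: Tuv FYf (ul_up _ (A8 f a c)); apply: ul_meet uac.
  by apply: ul_up ute (le_trans (imp_anti _ tt) (imp_mono _ _)); rewrite -leI_shunt.
- apply: ul_le => u /ul_meetP[unab ubc]; apply: imp_mem => v Tv.
  apply: TA_upset_mem (T8 u v _ _ (closed_upset a) (closed_upset b) Tv _) ubc.
  move=> w; rewrite /TAset full_UlE => Tw /phi_upsetE wa; apply/phi_upsetE.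
  by case/ul_join: (TA_upset_mem Tw unab) => // /ul_complN.
Qed.

End CanonicalRelation.

Theorem theorem9p6 (d : Order.disp_t) (A : ctbDistrLatticeType d)
  (imp : A -> A -> A) (hA : conditional_algebra imp) :
  (* (A4) *)
  ((forall a b c : A, imp a b <= imp c (imp a b)) <->
   (forall (u v w : Ul A) (Y Z : Ul A -> Prop), closed_Ul Y -> closed_Ul Z ->
      TA imp u Y v -> TA imp v Z w -> TA imp u Z w)) /\
  (* (A5) *)
  ((forall a b : A, a `&` imp a b <= b) <->
   (forall u : Ul A, TA imp u (singleton_Ul u) u)) /\
  (* (A6) *)
  ((forall a b : A, imp a b <= imp (~` b) (~` a)) <->
   (forall (u v : Ul A) (Y : Ul A -> Prop), closed_Ul Y ->
      TA imp u Y v -> exists w, Y w /\ TA imp u (singleton_Ul v) w)) /\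
  (* (A7) *)
  ((forall a b c : A, ~` (imp a b) <= imp c (~` (imp a b))) <->
   (forall (u v w : Ul A) (Y Z : Ul A -> Prop), closed_Ul Y -> closed_Ul Z ->
      TA imp u Y v -> TA imp u Z w -> TA imp v Z w)) /\
  (* (A8) *)
  ((forall a b c : A, imp \top (~` a `|` b) `&` imp b c <= imp a c) <->
   (forall (u v : Ul A) (Y Z : Ul A -> Prop), closed_Ul Y -> closed_Ul Z ->
      TA imp u Y v ->
      (forall w, TAset imp u full_Ul w -> Y w -> Z w) ->
      TA imp u Z v)).
Proof.
split; first exact: A4_iff.
split; first exact: A5_iff.
split; first exact: A6_iff.
split; first exact: A7_iff.
exact: A8_iff.
Qed.
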